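(* Fix an integer $m\ge1$ and a real $\bar c>m$. For $n\in\mathbb{N}$ define $H_2(n)=\max\{M\in\mathbb{N}_0:\lfloor (m+M)^2/4\rfloor\le mn\}$, $H_3(n)=\lfloor\sqrt{n\bar c+1}\rfloor$, $H_4(n)=\lfloor\sqrt{\tfrac14+n\bar c}-\tfrac12\rfloor$, $H_5(n)=\min\big(\lfloor n(\bar c-m)/k_5+m\rfloor,\,n\big)$, where $k_5=\lceil m+\sqrt{m^2+n(\bar c-2m)}\rceil$ if $m^2+n(\bar c-2m)\ge0$ and $k_5=1$ otherwise, and $H_6(n)=\min\big(\lfloor n(\bar c-m)/k_6+m\rfloor,\,n-1\big)$, where $k_6=\lceil m+1+\sqrt{(m+1)^2+n(\bar c-2m)}\rceil$ if $(m+1)^2+n(\bar c-2m)\ge0$ and $k_6=1$ otherwise. Then for every $q\in\{5,6\}$ and $p\in\{2,3,4\}$, $\liminf_{n\to\infty} H_q(n)/H_p(n)\ge1$.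
   Context: These functions are the upper bounds on the maximum degree under which various sufficient conditions guarantee graphicality (with loops) of a bidegree sequence with $n$ entries, minimum degree $m$ and average degree $\bar c$; the claim is purely about the displayed functions. *)

From Stdlib Require Import Reals ZArith Arith.
Open Scope R_scope.

(* floor and ceiling on R (Int_part r = up r - 1 is the floor of r) *)
Definition floorR (x : R) : Z := Int_part x.
Definition ceilR (x : R) : Z := (- Int_part (- x))%Z.

(* largest M <= k with P M (returns 0 if there is none) *)
Fixpoint max_below (P : nat -> bool) (k : nat) : nat :=
  match k with
  | O => O
  | S k' => if P (S k') then S k' else max_below P k'
  end.

(* Any such M satisfies M <= floor((m+M)^2/4) <= m n, so searching M <= m n
   is exhaustive.  (If the set is empty, which only happens for finitely many
   small n, the value defaults to 0.) *)
Definition H2 (m : nat) (n : nat) : Z :=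
  Z.of_nat (max_below (fun M => Nat.leb (Nat.div ((m + M) * (m + M)) 4) (m * n)) (m * n)).

Definition H3 (c : R) (n : nat) : Z := floorR (sqrt (INR n * c + 1)).

Definition H4 (c : R) (n : nat) : Z := floorR (sqrt (/4 + INR n * c) - /2).

Definition k5 (m : nat) (c : R) (n : nat) : Z :=
  let d := INR m ^ 2 + INR n * (c - 2 * INR m) in
  if Rle_dec 0 d then ceilR (INR m + sqrt d) else 1%Z.

Definition H5 (m : nat) (c : R) (n : nat) : Z :=
  Z.min (floorR (INR n * (c - INR m) / IZR (k5 m c n) + INR m)) (Z.of_nat n).

Definition k6 (m : nat) (c : R) (n : nat) : Z :=
  let d := (INR m + 1) ^ 2 + INR n * (c - 2 * INR m) in
  if Rle_dec 0 d then ceilR (INR m + 1 + sqrt d) else 1%Z.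

Definition H6 (m : nat) (c : R) (n : nat) : Z :=
  Z.min (floorR (INR n * (c - INR m) / IZR (k6 m c n) + INR m)) (Z.of_nat n - 1).

Definition H (q : nat) (m : nat) (c : R) (n : nat) : Z :=
  match q with
  | 2%nat => H2 m n
  | 3%nat => H3 c n
  | 4%nat => H4 c n
  | 5%nat => H5 m c n
  | _ => H6 m c n
  end.

Definition liminf_ge_1 (u : nat -> R) : Prop :=
  forall eps : R, 0 < eps -> exists N : nat, forall n : nat, (N <= n)%nat -> 1 - eps <= u n.

(* Each of H_2, H_3, H_4 is at most A √n + O(1) with A = √(4m) (for H_2) or A = √c̄ (for H_3, H_4),
   whereas k_5 and k_6 are at most T √n + O(1) with T = √(max(c̄ - 2m, 0)), so that H_5 and H_6
   are at least min(n (c̄ - m) / (T √n + O(1)), n) - 1.  The ratio therefore tends to at least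
   (c̄ - m) / (A T) >= 1, because (c̄ - m)² - c̄ (c̄ - 2m) = m² and (c̄ - m)² - 4m (c̄ - 2m) = (c̄ - 3m)². *)

From Stdlib Require Import Reals ZArith Arith Lra Lia Psatz.
Open Scope R_scope.

Lemma floorR_le x : IZR (floorR x) <= x.
Proof. unfold floorR; destruct (base_Int_part x); lra. Qed.

Lemma floorR_gt x : x - 1 < IZR (floorR x).
Proof. unfold floorR; destruct (base_Int_part x); lra. Qed.

Lemma ceilR_ge x : x <= IZR (ceilR x).
Proof. unfold ceilR; rewrite opp_IZR; destruct (base_Int_part (- x)); lra. Qed.

Lemma ceilR_lt x : IZR (ceilR x) < x + 1.
Proof. unfold ceilR; rewrite opp_IZR; destruct (base_Int_part (- x)); lra. Qed.

Lemma IZR_Zmin_ge (x y : R) (a b : Z) :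
  x <= IZR a -> y <= IZR b -> Rmin x y <= IZR (Z.min a b).
Proof.
  intros hx hy.
  destruct (Z.min_spec a b) as [[_ ->] | [_ ->]].
  - pose proof (Rmin_l x y); lra.
  - pose proof (Rmin_r x y); lra.
Qed.

Lemma sqrt_le_of_le_sq x y : 0 <= y -> x <= y ^ 2 -> sqrt x <= y.
Proof. intros hy hxy; rewrite <- (sqrt_pow2 y) by exact hy; apply sqrt_le_1_alt, hxy. Qed.

Lemma sqrt_add_le x y : 0 <= x -> 0 <= y -> sqrt (x + y) <= sqrt x + sqrt y.
Proof.
  intros hx hy.
  pose proof (sqrt_pos x); pose proof (sqrt_pos y).
  apply sqrt_le_of_le_sq; [lra |].
  replace ((sqrt x + sqrt y) ^ 2)
    with (sqrt x * sqrt x + sqrt y * sqrt y + 2 * (sqrt x * sqrt y)) by ring.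
  rewrite !sqrt_sqrt by assumption.
  nra.
Qed.

Lemma sqrt_INR_mul_le (x : R) (n : nat) :
  sqrt (INR n * x) <= sqrt (Rmax x 0) * sqrt (INR n).
Proof.
  rewrite Rmult_comm, <- sqrt_mult_alt by apply Rmax_r.
  apply sqrt_le_1_alt, Rmult_le_compat_r; [apply pos_INR | apply Rmax_l].
Qed.

Lemma max_below_cases P k : max_below P k = 0%nat \/ P (max_below P k) = true.
Proof.
  induction k as [|k IH]; simpl; auto.
  destruct (P (S k)) eqn:E; auto.
Qed.

Lemma max_below_ge P k j : P j = true -> (j <= k)%nat -> (j <= max_below P k)%nat.
Proof.
  intros hP. induction k as [|k IH]; intros hj; simpl; [lia |].
  destruct (P (S k)) eqn:E; [lia |].
  destruct (Nat.eq_dec j (S k)) as [-> | hne]; [congruence |].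
  apply IH; lia.
Qed.

Lemma H2_le m n : IZR (H2 m n) <= sqrt (4 * INR m) * sqrt (INR n) + 2.
Proof.
  unfold H2; rewrite <- INR_IZR_INZ.
  pose proof (sqrt_pos (4 * INR m)); pose proof (sqrt_pos (INR n)).
  assert (hprod : 0 <= sqrt (4 * INR m) * sqrt (INR n)) by (apply Rmult_le_pos; lra).
  destruct (max_below_cases (fun M => Nat.leb (Nat.div ((m + M) * (m + M)) 4) (m * n)) (m * n))
    as [-> | hP]; [simpl; lra |].
  set (M := max_below _ _) in *; clearbody M.
  apply Nat.leb_le in hP.
  assert (hsq : ((m + M) * (m + M) <= 4 * (m * n) + 4)%nat).
  { pose proof (Nat.div_mod_eq ((m + M) * (m + M)) 4).
    pose proof (Nat.mod_upper_bound ((m + M) * (m + M)) 4 ltac:(lia)).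
    lia. }
  apply le_INR in hsq; rewrite !mult_INR, !plus_INR, !mult_INR in hsq; simpl in hsq.
  pose proof (pos_INR m); pose proof (pos_INR M).
  assert (hroot : INR m + INR M <= sqrt (4 * INR m * INR n + 2 ^ 2)).
  { rewrite <- (sqrt_pow2 (INR m + INR M)) by lra.
    apply sqrt_le_1_alt; nra. }
  pose proof (sqrt_add_le (4 * INR m * INR n) (2 ^ 2)
                ltac:(pose proof (pos_INR n); nra) ltac:(lra)) as hadd.
  rewrite sqrt_pow2, sqrt_mult_alt in hadd by lra.
  lra.
Qed.

Lemma H3_le c n : 0 <= c -> IZR (H3 c n) <= sqrt c * sqrt (INR n) + 1.
Proof.
  intros hc. unfold H3.
  pose proof (sqrt_add_le (INR n * c) 1
                ltac:(apply Rmult_le_pos; [apply pos_INR | lra]) ltac:(lra)) as hadd.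
  pose proof (sqrt_INR_mul_le c n) as hmul.
  rewrite Rmax_left, sqrt_1 in * by lra.
  pose proof (floorR_le (sqrt (INR n * c + 1))).
  lra.
Qed.

Lemma H4_le c n : 0 <= c -> IZR (H4 c n) <= sqrt c * sqrt (INR n).
Proof.
  intros hc. unfold H4.
  pose proof (sqrt_add_le (/ 4) (INR n * c)
                ltac:(lra) ltac:(apply Rmult_le_pos; [apply pos_INR | lra])) as hadd.
  pose proof (sqrt_INR_mul_le c n) as hmul.
  rewrite Rmax_left in hmul by lra.
  replace (sqrt (/ 4)) with (/ 2) in hadd
    by (rewrite <- (sqrt_pow2 (/ 2)) by lra; f_equal; field).
  pose proof (floorR_le (sqrt (/ 4 + INR n * c) - / 2)).
  lra.
Qed.

Lemma H2_pos m n : (1 <= m)%nat -> ((m + 1) * (m + 1) <= n)%nat -> 0 < IZR (H2 m n).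
Proof.
  intros hm hn. unfold H2; rewrite <- INR_IZR_INZ.
  apply (lt_INR 0), max_below_ge; [| nia].
  apply Nat.leb_le.
  pose proof (Nat.Div0.div_le_upper_bound ((m + 1) * (m + 1)) 4 ((m + 1) * (m + 1)) ltac:(lia)).
  nia.
Qed.

Lemma H3_pos c n : 0 <= c -> 0 < IZR (H3 c n).
Proof.
  intros hc. unfold H3.
  assert (1 <= sqrt (INR n * c + 1)).
  { rewrite <- sqrt_1 at 1; apply sqrt_le_1_alt.
    pose proof (Rmult_le_pos _ _ (pos_INR n) hc); lra. }
  pose proof (floorR_gt (sqrt (INR n * c + 1))); lra.
Qed.

Lemma H4_pos c n : 1 < c -> (2 <= n)%nat -> 0 < IZR (H4 c n).
Proof.
  intros hc hn. unfold H4.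
  assert (3 / 2 <= sqrt (/ 4 + INR n * c)).
  { rewrite <- (sqrt_pow2 (3 / 2)) by lra; apply sqrt_le_1_alt.
    pose proof (le_INR 2 n hn); simpl in *; nra. }
  pose proof (floorR_gt (sqrt (/ 4 + INR n * c) - / 2)); lra.
Qed.

Definition k_rate (m : nat) (c : R) : R := sqrt (Rmax (c - 2 * INR m) 0).

Lemma ceilR_root_bounds (b t : R) (n : nat) : 0 <= b -> 0 <= b ^ 2 + INR n * t ->
  b <= IZR (ceilR (b + sqrt (b ^ 2 + INR n * t)))
    <= 2 * b + 1 + sqrt (Rmax t 0) * sqrt (INR n).
Proof.
  intros hb hd.
  pose proof (sqrt_add_le (b ^ 2) (INR n * Rmax t 0)
                ltac:(nra) ltac:(apply Rmult_le_pos; [apply pos_INR | apply Rmax_r])) as hadd.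
  rewrite sqrt_pow2, (Rmult_comm (INR n)), sqrt_mult_alt in hadd by (apply Rmax_r || lra).
  assert (sqrt (b ^ 2 + INR n * t) <= sqrt (b ^ 2 + Rmax t 0 * INR n)).
  { apply sqrt_le_1_alt, Rplus_le_compat_l.
    rewrite Rmult_comm; apply Rmult_le_compat_r; [apply pos_INR | apply Rmax_l]. }
  pose proof (sqrt_pos (b ^ 2 + INR n * t)).
  pose proof (ceilR_ge (b + sqrt (b ^ 2 + INR n * t))).
  pose proof (ceilR_lt (b + sqrt (b ^ 2 + INR n * t))).
  lra.
Qed.

Lemma k5_bounds m c n : (1 <= m)%nat ->
  1 <= IZR (k5 m c n) <= 2 * INR m + 1 + k_rate m c * sqrt (INR n).
Proof.
  intros hm. pose proof (le_INR 1 m hm); simpl in *.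
  pose proof (Rmult_le_pos _ _ (sqrt_pos (Rmax (c - 2 * INR m) 0)) (sqrt_pos (INR n))).
  unfold k5, k_rate. destruct (Rle_dec _ _) as [hd | _]; [| lra].
  pose proof (ceilR_root_bounds (INR m) (c - 2 * INR m) n ltac:(lra) hd); lra.
Qed.

Lemma k6_bounds m c n :
  1 <= IZR (k6 m c n) <= 2 * INR m + 3 + k_rate m c * sqrt (INR n).
Proof.
  pose proof (pos_INR m).
  pose proof (Rmult_le_pos _ _ (sqrt_pos (Rmax (c - 2 * INR m) 0)) (sqrt_pos (INR n))).
  unfold k6, k_rate. destruct (Rle_dec _ _) as [hd | _]; [| lra].
  pose proof (ceilR_root_bounds (INR m + 1) (c - 2 * INR m) n ltac:(lra) hd); lra.
Qed.

Lemma floorR_div_ge (x y k K : R) : 0 <= x -> 0 <= y -> 0 < k <= K ->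
  x / K - 1 <= IZR (floorR (x / k + y)).
Proof.
  intros hx hy hk.
  assert (x / K <= x / k).
  { apply Rmult_le_compat_l; [lra |]. apply Rinv_le_contravar; lra. }
  pose proof (floorR_gt (x / k + y)); lra.
Qed.

Lemma H5_ge m c n : (1 <= m)%nat -> INR m < c ->
  Rmin (INR n * (c - INR m) / (2 * INR m + 1 + k_rate m c * sqrt (INR n)) - 1) (INR n - 1)
    <= IZR (H5 m c n).
Proof.
  intros hm hc. unfold H5. apply IZR_Zmin_ge.
  - apply floorR_div_ge; [apply Rmult_le_pos; [apply pos_INR | lra] | apply pos_INR |].
    pose proof (k5_bounds m c n hm); lra.
  - rewrite <- INR_IZR_INZ; lra.
Qed.

Lemma H6_ge m c n : INR m < c ->
  Rmin (INR n * (c - INR m) / (2 * INR m + 3 + k_rate m c * sqrt (INR n)) - 1) (INR n - 1)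
    <= IZR (H6 m c n).
Proof.
  intros hc. unfold H6. apply IZR_Zmin_ge.
  - apply floorR_div_ge; [apply Rmult_le_pos; [apply pos_INR | lra] | apply pos_INR |].
    pose proof (k6_bounds m c n); lra.
  - rewrite minus_IZR, <- INR_IZR_INZ; lra.
Qed.

Lemma eventually_quadratic_ge (alpha beta gamma : R) : 0 < alpha ->
  exists S, forall s, S <= s -> beta * s + gamma <= alpha * (s * s).
Proof.
  intros ha.
  exists (Rmax 1 ((Rabs beta + Rabs gamma) / alpha)). intros s hs.
  pose proof (Rmax_l 1 ((Rabs beta + Rabs gamma) / alpha)).
  pose proof (Rmax_r 1 ((Rabs beta + Rabs gamma) / alpha)).
  assert (hgrow : Rabs beta + Rabs gamma <= alpha * s).
  { replace (Rabs beta + Rabs gamma) with (alpha * ((Rabs beta + Rabs gamma) / alpha))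
      by (field; lra).
    apply Rmult_le_compat_l; lra. }
  pose proof (Rle_abs beta); pose proof (Rle_abs gamma); pose proof (Rabs_pos gamma).
  nra.
Qed.

Lemma eventually_sqrt_INR_ge S : exists N, forall n, (N <= n)%nat -> S <= sqrt (INR n).
Proof.
  destruct (INR_unbounded (Rmax S 0 * Rmax S 0)) as [N hN].
  exists N. intros n hn.
  pose proof (Rmax_l S 0); pose proof (Rmax_r S 0); pose proof (le_INR _ _ hn).
  apply Rle_trans with (sqrt (Rmax S 0 * Rmax S 0)).
  - rewrite sqrt_square; assumption.
  - apply sqrt_le_1_alt; lra.
Qed.

Section RatioLiminf.

Variables a A B K T : R.
Hypotheses (ha : 0 < a) (hA : 0 <= A) (hB : 0 <= B) (hK : 0 < K) (hT : 0 <= T)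
  (hAT : A * T <= a).

(* With s = √n, cross-multiplying leaves (a - (1 - e) A T) s² against terms linear in s,
   and A T <= a makes that leading coefficient positive. *)
Lemma lower_bound_dominates (e : R) : 0 < e <= 1 ->
  exists S, forall s, S <= s ->
    (1 - e) * (A * s + B) <= Rmin (s * s * a / (K + T * s) - 1) (s * s - 1).
Proof.
  intros he.
  assert (halpha : 0 < a - (1 - e) * (A * T)) by nra.
  destruct (eventually_quadratic_ge _ ((1 - e) * (A * K + B * T) + T) (((1 - e) * B + 1) * K)
              halpha) as [S1 hS1].
  destruct (eventually_quadratic_ge 1 A (B + 1) ltac:(lra)) as [S2 hS2].
  exists (Rmax 0 (Rmax S1 S2)). intros s hs.
  pose proof (Rmax_l 0 (Rmax S1 S2)); pose proof (Rmax_r 0 (Rmax S1 S2)).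
  pose proof (Rmax_l S1 S2); pose proof (Rmax_r S1 S2).
  specialize (hS1 s ltac:(lra)); specialize (hS2 s ltac:(lra)).
  assert (0 <= A * s) by nra.
  apply Rmin_glb; [| nra].
  assert (hden : 0 < K + T * s) by nra.
  apply Rplus_le_reg_r with 1, Rmult_le_reg_r with (K + T * s); [exact hden |].
  replace ((s * s * a / (K + T * s) - 1 + 1) * (K + T * s)) with (s * s * a) by (field; lra).
  nra.
Qed.

Lemma liminf_ratio_ge_1 (u v : nat -> R) :
  (forall n, Rmin (INR n * a / (K + T * sqrt (INR n)) - 1) (INR n - 1) <= u n) ->
  (forall n, v n <= A * sqrt (INR n) + B) ->
  (exists N, forall n, (N <= n)%nat -> 0 < v n) ->
  liminf_ge_1 (fun n => u n / v n).
Proof.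
  intros hu hv [Npos hpos] eps heps.
  set (e := Rmin eps 1).
  assert (he : 0 < e <= 1) by (split; [apply Rmin_glb_lt | apply Rmin_r]; lra).
  destruct (lower_bound_dominates e he) as [S hS].
  destruct (eventually_sqrt_INR_ge S) as [Nsqrt hsqrt].
  exists (Nat.max Npos Nsqrt). intros n hn.
  specialize (hpos n ltac:(lia)).
  assert (hbound : (1 - e) * v n <= u n).
  { specialize (hS _ (hsqrt n ltac:(lia))).
    rewrite sqrt_sqrt in hS by apply pos_INR.
    specialize (hu n); specialize (hv n).
    assert (0 <= 1 - e) by lra.
    nra. }
  assert (e <= eps) by apply Rmin_l.
  apply Rle_trans with (1 - e); [lra |].
  apply Rmult_le_reg_r with (v n); [exact hpos |].
  replace (u n / v n * v n) with (u n) by (field; lra).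
  exact hbound.
Qed.

End RatioLiminf.

Lemma sqrt_mul_k_rate_le (m : nat) (c A2 : R) : 0 <= A2 -> INR m < c ->
  A2 * (c - 2 * INR m) <= (c - INR m) ^ 2 -> sqrt A2 * k_rate m c <= c - INR m.
Proof.
  intros hA2 hc h. unfold k_rate, Rmax.
  destruct (Rle_dec _ _).
  - rewrite sqrt_0; lra.
  - rewrite <- sqrt_mult_alt by exact hA2.
    apply sqrt_le_of_le_sq; lra.
Qed.

Theorem corollary4 (m : nat) (c : R) :
  (1 <= m)%nat -> INR m < c ->
  forall q p : nat, (q = 5%nat \/ q = 6%nat) -> (p = 2%nat \/ p = 3%nat \/ p = 4%nat) ->
  liminf_ge_1 (fun n => IZR (H q m c n) / IZR (H p m c n)).
Proof.
  intros hm hc q p hq hp.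
  pose proof (le_INR 1 m hm) as hm1; simpl in hm1.
  assert (hT : 0 <= k_rate m c) by apply sqrt_pos.
  pose proof (sqrt_pos c) as hsc; pose proof (sqrt_pos (4 * INR m)) as hsm.
  assert (hu : exists K, 0 < K /\ forall n,
     Rmin (INR n * (c - INR m) / (K + k_rate m c * sqrt (INR n)) - 1) (INR n - 1)
       <= IZR (H q m c n)).
  { destruct hq as [-> | ->].
    - exists (2 * INR m + 1); split; [lra |]. intros n; apply H5_ge; assumption.
    - exists (2 * INR m + 3); split; [lra |]. intros n; apply H6_ge; assumption. }
  destruct hu as [K [hK hu]].
  destruct hp as [-> | [-> | ->]].
  - apply (liminf_ratio_ge_1 (c - INR m) (sqrt (4 * INR m)) 2 K (k_rate m c));
      try (assumption || lra).
    + apply sqrt_mul_k_rate_le; [lra | lra |].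
      replace ((c - INR m) ^ 2) with (4 * INR m * (c - 2 * INR m) + (c - 3 * INR m) ^ 2) by ring.
      pose proof (pow2_ge_0 (c - 3 * INR m)); lra.
    + intros n; apply H2_le.
    + exists ((m + 1) * (m + 1))%nat; intros n hn; apply H2_pos; assumption.
  - apply (liminf_ratio_ge_1 (c - INR m) (sqrt c) 1 K (k_rate m c)); try (assumption || lra).
    + apply sqrt_mul_k_rate_le; [lra | lra |].
      replace ((c - INR m) ^ 2) with (c * (c - 2 * INR m) + INR m ^ 2) by ring.
      pose proof (pow2_ge_0 (INR m)); lra.
    + intros n; apply H3_le; lra.
    + exists 0%nat; intros n _; apply H3_pos; lra.
  - apply (liminf_ratio_ge_1 (c - INR m) (sqrt c) 0 K (k_rate m c)); try (assumption || lra).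
    + apply sqrt_mul_k_rate_le; [lra | lra |].
      replace ((c - INR m) ^ 2) with (c * (c - 2 * INR m) + INR m ^ 2) by ring.
      pose proof (pow2_ge_0 (INR m)); lra.
    + intros n; rewrite Rplus_0_r; apply H4_le; lra.
    + exists 2%nat; intros n hn; apply H4_pos; [lra | assumption].
Qed.
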